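(* Let $a_0,a_1,a_2,a_3\in\mathbb{R}$ and for real $\lambda$ let $$\mathbf{M}_\lambda=\begin{bmatrix}1&\frac{a_3}{2}&\frac{a_2-\lambda}{2}\\[2pt] \frac{a_3}{2}&\lambda&\frac{a_1}{2}\\[2pt] \frac{a_2-\lambda}{2}&\frac{a_1}{2}&a_0\end{bmatrix}.$$ For $\lambda_i\in\mathbb{R}$, the conic $\mathbf{M}_{\lambda_i}$ is a degenerate conic consisting of a real repeated line if and only if $\lambda_i=\frac{a_3^2}{4}$ and $\lambda_i$ is a root of multiplicity at least $2$ of the cubic equation $\det(\mathbf{M}_\lambda)=0$ in $\lambda$.
   Context: A real symmetric $3\times3$ matrix $\mathbf{M}$ defines the conic $\{[u:v:w]\in\mathbb{P}^2(\mathbb{C}) : (u,v,w)\mathbf{M}(u,v,w)^T=0\}$. The conic ''consists of a real repeated line'' if the quadratic form $(u,v,w)\mathbf{M}(u,v,w)^T$ equals $c\,\ell^2$ for some nonzero real constant $c$ and some nonzero linear form $\ell$ with real coefficients. Explicitly, $\det(\mathbf{M}_\lambda)=-\tfrac14\lambda^3+b_2\lambda^2+b_1\lambda+b_0$ with $b_0=\tfrac14(-a_1^2+a_1a_2a_3-a_0a_3^2)$, $b_1=\tfrac14(4a_0-a_2^2-a_1a_3)$, $b_2=\tfrac{a_2}{2}$. *)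

From HB Require Import structures.
From mathcomp Require Import all_boot all_order all_algebra.
Set Implicit Arguments. Unset Strict Implicit. Unset Printing Implicit Defensive.
Import Order.TTheory GRing.Theory Num.Theory.
Local Open Scope ring_scope.

Definition Mlam (R : realFieldType) (a0 a1 a2 a3 l : R) : 'M[R]_3 :=
  \matrix_(i < 3, j < 3)
    nth 0 (nth [::]
      [:: [:: 1; a3 / 2; (a2 - l) / 2];
          [:: a3 / 2; l; a1 / 2];
          [:: (a2 - l) / 2; a1 / 2; a0]] i) j.

Definition Mpoly (R : realFieldType) (a0 a1 a2 a3 : R) : 'M[{poly R}]_3 :=
  \matrix_(i < 3, j < 3)
    nth 0 (nth [::]
      [:: [:: 1; (a3 / 2)%:P; (a2 / 2)%:P - 2^-1 *: 'X];
          [:: (a3 / 2)%:P; 'X; (a1 / 2)%:P];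
          [:: (a2 / 2)%:P - 2^-1 *: 'X; (a1 / 2)%:P; a0%:P]] i) j.

Definition detpoly (R : realFieldType) (a0 a1 a2 a3 : R) : {poly R} :=
  \det (Mpoly a0 a1 a2 a3).

Definition qform (R : realFieldType) (M : 'M[R]_3) (x : 'rV[R]_3) : R :=
  (x *m M *m x^T) 0 0.

Definition linform (R : realFieldType) (l x : 'rV[R]_3) : R :=
  (x *m l^T) 0 0.

Definition real_repeated_line (R : realFieldType) (M : 'M[R]_3) : Prop :=
  exists (c : R) (l : 'rV[R]_3),
    c != 0 /\ l != 0 /\ forall x : 'rV[R]_3, qform M x = c * (linform l x) ^+ 2.

From HB Require Import structures.
From mathcomp Require Import all_boot all_order all_algebra.
From mathcomp Require Import ring.
Import Order.TTheory GRing.Theory Num.Theory.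
Local Open Scope ring_scope.
Set Implicit Arguments. Unset Strict Implicit. Unset Printing Implicit Defensive.

(* Since the corner entry of M_lambda is 1, the form is c l^2 exactly when it is the
   square of its first row, (u + (a3/2) v + ((a2 - lambda)/2) w)^2; comparing entries
   this means lambda = (a3/2)^2, a1/2 = (a3/2) c and a0 = c^2, where c = (a2 - lambda)/2.
   Expanding det M_lambda around lambda = (a3/2)^2 in T = lambda - (a3/2)^2 gives
   -e^2 + (f - e a3/2) T + O(T^2) with e = a1/2 - (a3/2) c and f = a0 - c^2, so T^2
   divides it iff e = f = 0: the same two conditions. *)

Lemma det_mx33 (R : comNzRingType) (A : 'M[R]_3) : \det A =
  A 0 0 * (A 1 1 * A 2 2 - A 1 2 * A 2 1)
  - A 0 1 * (A 1 0 * A 2 2 - A 1 2 * A 2 0)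
  + A 0 2 * (A 1 0 * A 2 1 - A 1 1 * A 2 0).
Proof.
(* Indexing through [inord] lets [/=] compute the ordinals produced by [lift]. *)
have -> : A = \matrix_(i, j) A (inord i) (inord j).
  by apply/matrixP => i j; rewrite mxE !inord_val.
rewrite (expand_det_row _ 0) !big_ord_recl big_ord0 /cofactor.
rewrite !(expand_det_row _ 0) !big_ord_recl !big_ord0 /cofactor !det_mx11 !mxE /=.
ring.
Qed.

Lemma mul_tr_row (R : comNzRingType) n (r : 'rV[R]_n) i j :
  (r^T *m r) i j = r 0 i * r 0 j.
Proof. by rewrite mxE big_ord1 mxE. Qed.

Section RepeatedLine.
Variable R : realFieldType.
Implicit Types (M N : 'M[R]_3) (x l : 'rV[R]_3).

Lemma delta_mulmx_delta M i j :
  ((delta_mx 0 i : 'rV[R]_3) *m M *m (delta_mx 0 j : 'rV[R]_3)^T) 0 0 = M i j.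
Proof. by rewrite -rowE trmx_delta -colE !mxE. Qed.

Lemma qformD M x y :
  qform M (x + y) = qform M x + qform M y
                    + (x *m M *m y^T) 0 0 + (y *m M *m x^T) 0 0.
Proof. rewrite /qform linearD !mulmxDl !mulmxDr !mxE; ring. Qed.

Lemma qformB M N x : qform (M - N) x = qform M x - qform N x.
Proof. by rewrite /qform mulmxBr mulmxBl !mxE. Qed.

Lemma sym_qform_inj M N :
  M^T = M -> N^T = N -> qform M =1 qform N -> M = N.
Proof.
move=> symM symN eqMN; apply/eqP; rewrite -subr_eq0; apply/eqP.
have symS : (M - N)^T = M - N by rewrite linearB /= symM symN.
have qS0 x : qform (M - N) x = 0 by rewrite qformB eqMN subrr.
move: (M - N) symS qS0 => S symS qS0.
have diagS i : S i i = 0 by rewrite -delta_mulmx_delta -(qS0 (delta_mx 0 i)).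
apply/matrixP => i j; rewrite [RHS]mxE.
have Sji : S j i = S i j by rewrite -[in LHS]symS mxE.
have := qS0 (delta_mx 0 i + delta_mx 0 j).
rewrite qformD /qform !delta_mulmx_delta !diagS Sji !add0r -mulr2n.
by move/eqP; rewrite mulrn_eq0 => /eqP.
Qed.

Lemma qform_rank1 c l x : qform (c *: (l^T *m l)) x = c * linform l x ^+ 2.
Proof.
rewrite /qform /linform -scalemxAr -scalemxAl mxE; congr (c * _).
rewrite !mulmxA -[_ *m x^T]mulmxA mxE big_ord1 -[l *m x^T]trmxK trmx_mul trmxK.
by rewrite [in X in _ * X]mxE expr2.
Qed.

Lemma real_repeated_lineP M :
  M^T = M -> M 0 0 = 1 ->
  real_repeated_line M <-> forall i j, M i j = M 0 i * M 0 j.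
Proof.
move=> symM M00; split=> [[c [l [_ [_ qMl]]]] i j | Msq].
  have rank1 : M = c *: (l^T *m l).
    apply: sym_qform_inj => //; first by rewrite linearZ /= trmx_mul trmxK.
    by move=> x; rewrite qMl qform_rank1.
  have Mij k m : M k m = c * (l 0 k * l 0 m) by rewrite rank1 mxE mul_tr_row.
  by rewrite -[LHS]mul1r -M00 !Mij; ring.
exists 1, (row 0 M); split; first exact: oner_neq0.
split.
  by apply/eqP => /matrixP/(_ 0 0); rewrite !mxE M00; apply/eqP; exact: oner_neq0.
have M_sq : M = 1 *: ((row 0 M)^T *m row 0 M).
  by apply/matrixP => i j; rewrite scale1r mul_tr_row !mxE Msq.
by move=> x; rewrite {1}M_sq qform_rank1.
Qed.

End RepeatedLine.

Lemma dvdp_XsubC_sqr (R : fieldType) (x k1 k0 : R) (q : {poly R}) :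
  ('X - x%:P) ^+ 2 %| ('X - x%:P) ^+ 2 * q + k1 *: ('X - x%:P) + k0%:P
  = (k1 == 0) && (k0 == 0).
Proof.
rewrite -addrA dvdp_addr ?dvdp_mulIl //.
apply/idP/andP => [div | [/eqP-> /eqP->]]; last by rewrite scale0r add0r dvdp0.
have k0_eq0 : k0 = 0.
  have : root (k1 *: ('X - x%:P) + k0%:P) x.
    have XsubC_dvd_sqr : 'X - x%:P %| ('X - x%:P) ^+ 2 by rewrite expr2 dvdp_mulr.
    by rewrite -dvdp_XsubCl (dvdp_trans XsubC_dvd_sqr div).
  by rewrite /root !hornerE subrr mulr0 add0r => /eqP.
move: div; rewrite k0_eq0 addr0 -mul_polyC expr2 dvdp_mul2r ?polyXsubC_eq0 //.
by rewrite dvdp_XsubCl rootC eqxx => ->.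
Qed.

Section DetpolyExpansion.
Variables (R : realFieldType) (a0 a1 a2 a3 : R).
Local Notation b := (a3 / 2).
Local Notation c := ((a2 - b ^+ 2) / 2).
Local Notation T := ('X - (b ^+ 2)%:P).

Lemma detpoly_expand : exists q : {poly R},
  detpoly a0 a1 a2 a3 = T ^+ 2 * q + (a0 - c ^+ 2 - (a1 / 2 - b * c) * b) *: T
                        + (- (a1 / 2 - b * c) ^+ 2)%:P.
Proof.
have two_half : 2 * 2^-1 = 1 :> R by rewrite divff // pnatr_eq0.
(* [ring] treats [2^-1] as an atom, so the factor [2 * 2^-1] is made explicit. *)
have -> : a0 - c ^+ 2 - (a1 / 2 - b * c) * b
          = a0 - c ^+ 2 - (a1 / 2 - b * c) * b * (2 * 2^-1).
  by rewrite two_half mulr1.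
exists ((c * (2 * 2^-1) - (b * 2^-1) ^+ 2)%:P - 2^-1 ^+ 2 *: T).
rewrite /detpoly det_mx33 !mxE /= -!mul_polyC.
ring.
Qed.

Lemma dvdp_detpoly :
  (T ^+ 2 %| detpoly a0 a1 a2 a3) = (a1 / 2 == b * c) && (a0 == c ^+ 2).
Proof.
have [q ->] := detpoly_expand.
rewrite dvdp_XsubC_sqr oppr_eq0 sqrf_eq0 !subr_eq0 andbC.
by have [-> | //] := eqVneq (a1 / 2) (b * c); rewrite subrr mul0r subr_eq0.
Qed.

End DetpolyExpansion.

Lemma Mlam_sym (R : realFieldType) (a0 a1 a2 a3 l : R) :
  (Mlam a0 a1 a2 a3 l)^T = Mlam a0 a1 a2 a3 l.
Proof.
apply/matrixP => i j; rewrite !mxE.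
by case: i => [[|[|[|//]]] ?]; case: j => [[|[|[|//]]] ?].
Qed.

Lemma Mlam_repeated_lineP (R : realFieldType) (a0 a1 a2 a3 l : R) :
  real_repeated_line (Mlam a0 a1 a2 a3 l) <->
  [/\ l = (a3 / 2) ^+ 2, a1 / 2 = a3 / 2 * ((a2 - l) / 2)
    & a0 = ((a2 - l) / 2) ^+ 2].
Proof.
rewrite real_repeated_lineP ?Mlam_sym ?mxE //.
split=> [Msq | [l_eq a1_eq a0_eq] i j].
  by move: (Msq 1 1) (Msq 1 2) (Msq 2 2); rewrite !mxE /= -!expr2.
rewrite !mxE.
case: i => [[|[|[|//]]] ?]; case: j => [[|[|[|//]]] ?] /=;
  by rewrite ?mul1r ?mulr1 -?expr2 // a1_eq mulrC.
Qed.

Theorem lemma3 (R : realFieldType) (a0 a1 a2 a3 li : R) :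
  real_repeated_line (Mlam a0 a1 a2 a3 li) <->
  (li = a3 ^+ 2 / 4 /\ ('X - li%:P) ^+ 2 %| detpoly a0 a1 a2 a3).
Proof.
have sqr_half : a3 ^+ 2 / 4 = (a3 / 2) ^+ 2.
  by rewrite expr_div_n -natrX.
rewrite Mlam_repeated_lineP sqr_half.
split=> [[-> a1_eq a0_eq] | [-> ]]; rewrite dvdp_detpoly.
  by rewrite a1_eq a0_eq !eqxx.
by case/andP => /eqP a1_eq /eqP a0_eq.
Qed.
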